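(* Let $\alpha\geq 1$ be a real number. If a connected $(n,m)$-graph $G$ has maximum value of $\chi_\alpha$ among all connected $(n,m)$-graphs, then the maximum vertex degree in $G$ is $n-1$.
   Context: All graphs are finite, simple, undirected and connected; an $(n,m)$-graph has $n$ vertices and $m$ edges. The general sum-connectivity index is $\chi_\alpha(G)=\sum_{uv\in E(G)}(d_u+d_v)^\alpha$, where $d_u$ is the degree of vertex $u$. *)

From HB Require Import structures.
From mathcomp Require Import all_boot all_order all_algebra.
From mathcomp Require Import reals exp.
Set Implicit Arguments. Unset Strict Implicit. Unset Printing Implicit Defensive.
Import Order.TTheory GRing.Theory Num.Theory.

Definition simple_graph (n : nat) (e : rel 'I_n) : Prop :=
  symmetric e /\ irreflexive e.

Definition connected_graph (n : nat) (e : rel 'I_n) : Prop :=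
  forall x y : 'I_n, connect e x y.

(* edge set: unordered pairs {u,v} represented with u < v *)
Definition edges (n : nat) (e : rel 'I_n) : {set 'I_n * 'I_n} :=
  [set p : 'I_n * 'I_n | (p.1 < p.2)%N && e p.1 p.2].

Definition nedges (n : nat) (e : rel 'I_n) : nat := #|edges e|.

Definition deg (n : nat) (e : rel 'I_n) (u : 'I_n) : nat := #|[set v | e u v]|.

Definition max_deg (n : nat) (e : rel 'I_n) : nat := \max_(u : 'I_n) deg e u.

Local Open Scope ring_scope.

Definition chi (R : realType) (alpha : R) (n : nat) (e : rel 'I_n) : R :=
  \sum_(p in edges e) powR ((deg e p.1 + deg e p.2)%:R) alpha.

From mathcomp Require Import classical_sets.
From HB Require Import structures.
From mathcomp Require Import all_boot all_order all_algebra.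
From mathcomp Require Import reals exp convex hoelder.
From mathcomp Require Import lra zify interval_inference.
Import Order.TTheory GRing.Theory Num.Theory.
Local Open Scope ring_scope.
Set Implicit Arguments. Unset Strict Implicit.

(* Let u be a vertex of maximum degree.  If some vertex is not adjacent to u,
   connectivity yields a path u - x - y with y neither equal nor adjacent to u.
   The Kelmans operation moving every neighbour of x outside the closed
   neighbourhood of u from x to u keeps the graph connected with the same
   number of edges, raises deg u and lowers deg x by the same amount, and fixes
   all other degrees.  Since deg x <= deg u and t |-> t^alpha is convex and
   increasing, chi_alpha strictly increases (the edge xy becomes uy, of strictly
   larger weight), contradicting maximality.  Hence u is adjacent to every
   other vertex. *)

Lemma convex_le_spread (R : realFieldType) (D : set R^o) (f : R^o -> R)
    (lo hi a b : R) :
  convex_function D f -> lo \in D -> hi \in D ->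
  lo <= a <= hi -> a + b = lo + hi -> f a + f b <= f lo + f hi.
Proof.
move=> cvx loD hiD /andP[loa ahi] ab.
have [hi_lo|lo_hi] := eqVneq hi lo.
  have a_lo : a = lo by apply/eqP; rewrite eq_le loa -hi_lo ahi.
  have b_lo : b = lo by rewrite hi_lo a_lo in ab; lra.
  by rewrite a_lo b_lo hi_lo.
have hilo : 0 < hi - lo by rewrite subr_gt0 lt_neqAle eq_sym lo_hi (le_trans loa).
pose t := (a - lo) / (hi - lo).
have t01 : 0 <= t <= 1.
  rewrite /t ler_pdivrMr // mul1r divr_ge0 ?(ltW hilo) ?subr_ge0 //; lra.
have tE : t * (hi - lo) = a - lo by rewrite /t mulfVK ?gt_eqF.
pose ti := Itv01 (proj1 (andP t01)) (proj2 (andP t01)).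
have := cvx ti hi lo hiD loD; have := cvx ti lo hi loD hiD.
rewrite !convRE [X in f X <= _ -> _]convRE [X in _ -> f X <= _ -> _]convRE.
rewrite /= /unstable.onem.
have -> : t * lo + (1 - t) * hi = b by nra.
have -> : t * hi + (1 - t) * lo = a by nra.
lra.
Qed.

Lemma powRD_le_spread (R : realType) (p lo hi a b : R) : 1 <= p -> 0 <= lo ->
  lo <= a <= hi -> a + b = lo + hi -> a `^ p + b `^ p <= lo `^ p + hi `^ p.
Proof.
move=> p_ge1 lo_ge0 /andP[loa ahi] ab.
have inD (z : R) : 0 <= z -> z \in (`[0, +oo[%classic : set R).
  by move=> z_ge0; apply: mem_set; rewrite /= in_itv /= z_ge0.
apply: (convex_le_spread (convex_powR p_ge1)); rewrite ?inD ?loa //; lra.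
Qed.

Lemma bigD2 (I : finType) (V : nmodType) (F : I -> V) (u x : I) :
  x != u -> \sum_a F a = F u + F x + \sum_(a | (a != u) && (a != x)) F a.
Proof. by move=> xu; rewrite (bigD1 u) //= (bigD1 x) //= addrA. Qed.

Lemma sum_sym_lt_two_rows (I : finType) (R : numDomainType)
    (h h' : I -> I -> R) (u x y : I) : x != u ->
  (forall a b, h a b = h b a) -> (forall a b, h' a b = h' b a) ->
  (forall a b, a != u -> a != x -> b != u -> b != x -> h' a b = h a b) ->
  (forall b, h u b + h x b <= h' u b + h' x b) ->
  h u y + h x y < h' u y + h' x y ->
  \sum_a \sum_b h a b < \sum_a \sum_b h' a b.
Proof.
move=> xu h_sym h'_sym h'_off h_le h_lt.
have rows_split (k : I -> I -> R) : (forall a b, k a b = k b a) ->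
  \sum_a \sum_b k a b = \sum_b (k u b + k x b) +
     \sum_(a | (a != u) && (a != x))
        ((k u a + k x a) + \sum_(b | (b != u) && (b != x)) k a b).
  move=> k_sym; rewrite [LHS](bigD2 _ xu) big_split /=; congr (_ + _).
  by apply: eq_bigr => a _; rewrite [LHS](bigD2 _ xu) (k_sym a u) (k_sym a x).
rewrite (rows_split _ h_sym) (rows_split _ h'_sym); apply: ltr_leD.
  rewrite (bigD1 y) //= [X in _ < X](bigD1 y) //=.
  by apply: ltr_leD => //; apply: ler_sum.
apply: ler_sum => a /andP[au ax]; apply: lerD => //.
by rewrite [X in _ <= X](eq_bigr (h a)) // => b /andP[bu bx]; rewrite h'_off.
Qed.

Lemma sum_edges_sym (n : nat) (c : rel 'I_n) (V : nmodType)
    (g : 'I_n -> 'I_n -> V) :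
  symmetric c -> irreflexive c -> (forall a b, g a b = g b a) ->
  (\sum_(p in edges c) g p.1 p.2) *+ 2 =
  \sum_a \sum_b (if c a b then g a b else 0).
Proof.
move=> c_sym c_irr g_sym.
pose half (lt : 'I_n -> 'I_n -> bool) :=
  \sum_a \sum_b (if lt a b && c a b then g a b else 0).
have edgesE : \sum_(p in edges c) g p.1 p.2 = half (fun a b => a < b)%N.
  rewrite /half pair_big /= big_mkcond /=.
  by apply: eq_bigr => -[a b] _; rewrite inE.
have half_swap : half (fun a b => b < a)%N = half (fun a b => a < b)%N.
  by rewrite /half exchange_big /=; apply: eq_bigr => a _;
     apply: eq_bigr => b _; rewrite c_sym g_sym.
rewrite mulr2n edgesE -{1}half_swap -big_split /=.
apply: eq_bigr => a _; rewrite -big_split /=; apply: eq_bigr => b _.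
case cab: (c a b); rewrite ?andbF ?addr0 // !andbT.
case: ltngtP => [||/val_inj ab]; rewrite ?addr0 ?add0r //.
by rewrite ab c_irr in cab.
Qed.

Lemma handshake (n : nat) (c : rel 'I_n) : symmetric c -> irreflexive c ->
  (nedges c).*2 = (\sum_a deg c a)%N.
Proof.
move=> c_sym c_irr.
have := @sum_edges_sym _ c _ (fun _ _ => 1%N) c_sym c_irr (fun _ _ => erefl).
rewrite mulr2n sum1_card -/(nedges c) -addnn => edges2.
apply: etrans edges2 _; apply: eq_bigr => a _.
by rewrite -big_mkcond sum1_card /deg; apply: eq_card => b; rewrite inE.
Qed.

Section Kelmans.
Variables (n : nat) (e : rel 'I_n) (u x : 'I_n).
Hypotheses (e_sym : symmetric e) (e_irr : irreflexive e) (xu : x != u).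

Definition moved (z : 'I_n) : bool := [&& e x z, ~~ e u z & z != u].

(* Every edge x z with [moved z] is replaced by the edge u z. *)
Definition kelmans : rel 'I_n := fun a b =>
  (e a b && ~~ ((a == x) && moved b || (b == x) && moved a)) ||
  ((a == u) && moved b || (b == u) && moved a).

Lemma moved_u : moved u = false.
Proof. by rewrite /moved eqxx !andbF. Qed.

Lemma moved_x : moved x = false.
Proof. by rewrite /moved e_irr. Qed.

Lemma kelmans_sym : symmetric kelmans.
Proof.
by move=> a b; rewrite /kelmans e_sym; congr (_ && ~~ _ || _); apply: orbC.
Qed.

Lemma kelmans_irr : irreflexive kelmans.
Proof.
by move=> a; rewrite /kelmans e_irr /= orbb; case: eqP => // ->; rewrite moved_u.
Qed.

Lemma kelmans_u b : kelmans u b = e u b || moved b.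
Proof.
rewrite /kelmans eqxx eq_sym (negbTE xu) moved_u !andbF !orbF /=.
by case: (moved b) (e u b) => -[].
Qed.

Lemma kelmans_x b : kelmans x b = e x b && ~~ moved b.
Proof. by rewrite /kelmans eqxx (negbTE xu) moved_x !andbF !orbF. Qed.

Lemma kelmans_other a b : a != u -> a != x ->
  kelmans a b = (e a b && ~~ ((b == x) && moved a)) || ((b == u) && moved a).
Proof. by move=> au ax; rewrite /kelmans (negbTE au) (negbTE ax). Qed.

Lemma kelmans_off a b : a != u -> a != x -> b != u -> b != x ->
  kelmans a b = e a b.
Proof.
by move=> au ax bu bx; rewrite kelmans_other // (negbTE bu) (negbTE bx) andbT orbF.
Qed.

Lemma deg_kelmans_u : deg kelmans u = (deg e u + #|[set z | moved z]|)%N.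
Proof.
rewrite /deg.
have -> : [set v | kelmans u v] = [set v | e u v] :|: [set z | moved z].
  by apply/setP => v; rewrite !inE kelmans_u.
apply/eqP; rewrite (leq_card_setU _ _).2.
by apply/pred0P => v; rewrite /= !inE /moved; case: (e u v); rewrite ?andbF.
Qed.

Lemma deg_kelmans_x : (#|[set z | moved z]| + deg kelmans x)%N = deg e x.
Proof.
rewrite /deg -(cardsID [set z | moved z] [set v | e x v]).
congr addn; apply: eq_card => v; rewrite !inE.
  by rewrite andb_idl // => /and3P[].
by rewrite kelmans_x andbC.
Qed.

Lemma deg_kelmans_other z : z != u -> z != x -> deg kelmans z = deg e z.
Proof.
move=> zu zx; rewrite /deg.
case Mz: (moved z); last first.
  by apply: eq_card => v; rewrite !inE kelmans_other // Mz !andbF orbF andbT.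
have [exz nuz _] := and3P Mz.
have -> : [set v | kelmans z v] = u |: ([set v | e z v] :\ x).
  by apply/setP => v; rewrite !inE kelmans_other // Mz !andbT orbC andbC.
rewrite cardsU1 [in RHS](cardsD1 x) !inE /= (e_sym z u) (negbTE nuz) andbF.
by rewrite (e_sym z x) exz.
Qed.

Lemma nedges_kelmans : nedges kelmans = nedges e.
Proof.
apply: double_inj; rewrite !handshake //; last first.
- exact: kelmans_irr.
- exact: kelmans_sym.
rewrite !(bigD2 _ xu) deg_kelmans_u -deg_kelmans_x; congr (_ + _).
  exact/esym/addnA.
by apply: eq_bigr => z /andP[zu zx]; exact: deg_kelmans_other.
Qed.

Lemma connected_kelmans : e u x -> connected_graph e -> connected_graph kelmans.
Proof.
move=> eux e_conn a b; apply: connect_sub (e_conn a b) => p q epq.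
have [kpq|nkpq] := boolP (kelmans p q); first exact: connect1.
have moved_x_conn z : moved z -> connect kelmans z x.
  move=> Mz; apply: (@connect_trans _ _ u); apply: connect1.
  - by rewrite kelmans_sym kelmans_u Mz orbT.
  - by rewrite kelmans_u eux.
have : ((p == x) && moved q) || ((q == x) && moved p).
  by apply/negPn/negP => h; move: nkpq; rewrite /kelmans epq h.
case/orP => /andP[/eqP-> Mz]; last exact: moved_x_conn.
by rewrite (sym_connect_sym kelmans_sym); exact: moved_x_conn.
Qed.

End Kelmans.

Section KelmansChi.
Variables (R : realType) (alpha : R).
Hypothesis alpha_ge1 : 1 <= alpha.

Let pw (t : nat) : R := t%:R `^ alpha.

Let pw_le s t : (s <= t)%N -> pw s <= pw t.
Proof.
by move=> st; rewrite ge0_ler_powR ?nnegrE ?ler_nat // (le_trans _ alpha_ge1).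
Qed.

Let pw_lt s t : (s < t)%N -> pw s < pw t.
Proof.
by move=> st; rewrite gt0_ltr_powR ?nnegrE ?ltr_nat // (lt_le_trans _ alpha_ge1).
Qed.

Let pw_spread lo hi a b : (lo <= a <= hi)%N -> (a + b = lo + hi)%N ->
  pw a + pw b <= pw lo + pw hi.
Proof.
move=> /andP[loa ahi] ab; apply: powRD_le_spread; rewrite ?ler_nat ?loa //.
by rewrite -!natrD ab.
Qed.

Variable n : nat.

Definition chi_term (c : rel 'I_n) (a b : 'I_n) : R :=
  if c a b then pw (deg c a + deg c b) else 0.

Lemma chi_term_sym c : symmetric c ->
  forall a b, chi_term c a b = chi_term c b a.
Proof. by move=> c_sym a b; rewrite /chi_term c_sym addnC. Qed.

Lemma chi_double c : symmetric c -> irreflexive c ->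
  chi alpha c *+ 2 = \sum_a \sum_b chi_term c a b.
Proof.
move=> c_sym c_irr; rewrite /chi.
rewrite (@sum_edges_sym _ c _ (fun a b => pw (deg c a + deg c b))) //.
by move=> a b; rewrite addnC.
Qed.

Variables (e : rel 'I_n) (u x y : 'I_n).
Hypotheses (e_sym : symmetric e) (e_irr : irreflexive e) (xu : x != u).
Hypotheses (deg_x_le_u : (deg e x <= deg e u)%N) (moved_y : moved e u x y).

Local Notation e' := (kelmans e u x).
Local Notation k := #|[set z | moved e u x z]|.

(* These three facts enter the proofs below only as context for [lia]. *)
Let k_gt0 : (0 < k)%N.
Proof. by apply/card_gt0P; exists y; rewrite inE. Qed.

Let deg_u' : deg e' u = (deg e u + k)%N.
Proof. exact: deg_kelmans_u. Qed.

Let deg_x' : (k + deg e' x)%N = deg e x.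
Proof. exact: deg_kelmans_x. Qed.

Lemma kelmans_rows_le b :
  chi_term e u b + chi_term e x b <= chi_term e' u b + chi_term e' x b.
Proof.
have [->|bu] := eqVneq b u.
  rewrite /chi_term e_irr kelmans_irr // kelmans_x // moved_u (e_sym x u) /=.
  by rewrite !add0r andbT; case: (e u x) => //; apply: pw_le; lia.
have [->|bx] := eqVneq b x.
  rewrite /chi_term e_irr kelmans_irr // kelmans_u // moved_x //=.
  by rewrite !addr0 orbF; case: (e u x) => //; apply: pw_le; lia.
have movedE : moved e u x b = e x b && ~~ e u b by rewrite /moved bu andbT.
rewrite /chi_term kelmans_u // kelmans_x // movedE (deg_kelmans_other e_sym bu bx).
case: (e u b); case: (e x b) => /=; rewrite ?addr0 ?add0r //.
- by rewrite [X in _ <= X]addrC; apply: pw_spread; lia.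
- by apply: pw_le; lia.
- by apply/ltW/pw_lt; lia.
Qed.

Lemma kelmans_rows_lt :
  chi_term e u y + chi_term e x y < chi_term e' u y + chi_term e' x y.
Proof.
have [exy nuy yu] := and3P moved_y.
have yx : y != x by apply: contraTneq exy => ->; rewrite e_irr.
rewrite /chi_term kelmans_u // kelmans_x // moved_y (negbTE nuy) exy /=.
by rewrite (deg_kelmans_other e_sym yu yx) add0r addr0; apply: pw_lt; lia.
Qed.

Lemma chi_kelmans_gt : chi alpha e < chi alpha e'.
Proof.
have e'_sym := kelmans_sym u x e_sym; have e'_irr := kelmans_irr u x e_irr.
rewrite -(ltr_pMn2r (ltn0Sn 1)) !chi_double //.
apply: (sum_sym_lt_two_rows xu (chi_term_sym e_sym) (chi_term_sym e'_sym)).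
- move=> a b au ax bu bx.
  by rewrite /chi_term kelmans_off // !(deg_kelmans_other e_sym).
- exact: kelmans_rows_le.
- exact: kelmans_rows_lt.
Qed.

End KelmansChi.

Lemma exists_distance2 (T : finType) (e : rel T) (u w : T) : symmetric e ->
  connect e u w -> w != u -> ~~ e u w ->
  exists x y, [/\ e u x, e x y, y != u & ~~ e u y].
Proof.
move=> e_sym uw wu nuw.
have [/existsP[x /existsP[y /and4P[]]]|no_path] :=
  boolP [exists x, exists y, [&& e u x, e x y, y != u & ~~ e u y]].
  by exists x, y.
pose ball := [pred z | (z == u) || e u z].
suff ball_closed : closed e ball.
  have := closed_connect ball_closed uw.
  by rewrite !inE eqxx (negbTE wu) (negbTE nuw).
have step p q : e p q -> p \in ball -> q \in ball.
  move=> epq; rewrite !inE => /orP[/eqP<-|eup]; first by rewrite epq orbT.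
  apply/negPn/negP; rewrite negb_or => /andP[qu nuq]; apply: (negP no_path).
  by apply/existsP; exists p; apply/existsP; exists q; rewrite eup epq qu nuq.
by move=> p q epq; apply/idP/idP; apply: step; rewrite // e_sym.
Qed.

Lemma deg_dominating (n : nat) (e : rel 'I_n) (u : 'I_n) : irreflexive e ->
  (forall v, v != u -> e u v) -> deg e u = (n - 1)%N.
Proof.
move=> e_irr u_dom; rewrite /deg subn1 -[n in n.-1]card_ord -(cardsC1 u).
apply: eq_card => v; rewrite !inE.
by have [->|/u_dom->] := eqVneq v u; rewrite ?e_irr.
Qed.

Theorem corollary3 (R : realType) (alpha : R) (n : nat) (e : rel 'I_n) :
  1 <= alpha ->
  simple_graph e -> connected_graph e ->
  (forall e' : rel 'I_n, simple_graph e' -> connected_graph e' ->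
     nedges e' = nedges e -> chi alpha e' <= chi alpha e) ->
  max_deg e = (n - 1)%N.
Proof.
move=> alpha_ge1 [e_sym e_irr] e_conn chi_max.
case: n e e_sym e_irr e_conn chi_max => [|n] e e_sym e_irr e_conn chi_max.
  by rewrite /max_deg big_ord0.
have [u maxE] : {u | max_deg e = deg e u}.
  by apply: bigop.eq_bigmax; rewrite card_ord.
rewrite maxE; apply: deg_dominating => // w wu.
apply/negPn/negP => nuw.
have [x [y [eux exy yu nuy]]] := exists_distance2 e_sym (e_conn u w) wu nuw.
have xu : x != u by apply: contraTneq eux => ->; rewrite e_irr.
have deg_x_le_u : (deg e x <= deg e u)%N by rewrite -maxE leq_bigmax.
have moved_y : moved e u x y by rewrite /moved exy nuy yu.
have := chi_max (kelmans e u x)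
  (conj (kelmans_sym u x e_sym) (kelmans_irr u x e_irr))
  (connected_kelmans e_sym xu eux e_conn) (nedges_kelmans e_sym e_irr xu).
by rewrite leNgt (chi_kelmans_gt alpha_ge1 e_sym e_irr xu deg_x_le_u moved_y).
Qed.
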